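(* Let $k$ be a field and $w\in k(X)$ a non-constant rational function, viewed as a morphism $w\colon\mathbb{P}^1\to\mathbb{P}^1$, such that $k(X)/k(w)$ is separable and all ramification of $w$ is tame. Assume that $w$ has a pole of order at least $2$ at $\infty$ and that all other poles of $w$ over $\bar k$ are simple. Assume further that the numerator $g\in k[X]$ of the derivative $w'$ (written in lowest terms) is irreducible in $k[X]$ or the square of an irreducible polynomial in $k[X]$. Then $w$ is indecomposable over $k$, i.e. there are no $u,v\in k(X)$ with $\deg u>1$, $\deg v>1$ and $w=v\circ u$.
   Context: Ramification of $w$ at a point is tame if the ramification index there is not divisible by $\mathrm{char}(k)$. The degree of a rational function $u=a/b$ in lowest terms is $\max\{\deg a,\deg b\}$. *)

From HB Require Import structures.
From mathcomp Require Import all_boot all_order all_algebra.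
Set Implicit Arguments. Unset Strict Implicit. Unset Printing Implicit Defensive.
Import Order.TTheory GRing.Theory Num.Theory.
Local Open Scope ring_scope.

(* A rational function over a field K is represented by a pair (a, b) of
   polynomials with b != 0 and coprimep a b (lowest terms): it denotes a/b. *)
Definition rat_lowest (K : fieldType) (a b : {poly K}) : Prop :=
  b != 0 /\ coprimep a b.

Definition rdeg (K : fieldType) (a b : {poly K}) : nat :=
  maxn (size a).-1 (size b).-1.

(* Homogenised evaluation: for e of degree <= n,
   homog n e c d = d^n * e(c/d) = \sum_i e_i c^i d^(n-i). *)
Definition homog (K : fieldType) (n : nat) (e c d : {poly K}) : {poly K} :=
  \sum_(i < size e) e`_i *: (c ^+ i * d ^+ (n - i)).

(* (e/f) o (c/d) = homog n e c d / homog n f c d with n = rdeg e f.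
   So  a/b = (e/f) o (c/d)  iff  a * homog n f c d = b * homog n e c d
   (the denominators being nonzero). *)
Definition is_composition (K : fieldType) (a b e f c d : {poly K}) : Prop :=
  let n := rdeg e f in
  homog n f c d != 0 /\ a * homog n f c d = b * homog n e c d.

Definition indecomposable (K : fieldType) (a b : {poly K}) : Prop :=
  ~ exists c d e f : {poly K},
      [/\ rat_lowest c d, rat_lowest e f, (1 < rdeg c d)%N, (1 < rdeg e f)%N
        & is_composition a b e f c d].

(* Ramification index of w = a/b (lowest terms, over a field L) at a finite
   point x of the affine line: if x is a pole it is the multiplicity of x
   as a root of b; otherwise it is the multiplicity of x as a root of
   a - w(x) b  (i.e. the order of vanishing of w - w(x) at x). *)
Definition ram_index_fin (L : fieldType) (a b : {poly L}) (x : L) : nat :=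
  if b.[x] == 0 then mup x b else mup x (a - (a.[x] / b.[x]) *: b).

(* Ramification index at infinity: if deg a > deg b, w has a pole of order
   deg a - deg b there; otherwise w(oo) = c (c = lead a / lead b if the
   degrees agree, 0 otherwise) and the index is deg b - deg (a - c b),
   the order of vanishing of w - c at infinity. *)
Definition ram_index_inf (L : fieldType) (a b : {poly L}) : nat :=
  if (size b < size a)%N then (size a - size b)%N
  else let c := if size a == size b then lead_coef a / lead_coef b else 0 in
       (size b - size (a - c *: b)%R)%N.

(* All ramification of w = a/b is tame: at every point of P^1 over every
   field extension L of K (in particular over an algebraic closure), the
   ramification index is not divisible by char K. *)
Definition tame_ramification (K : fieldType) (a b : {poly K}) : Prop :=
  forall p : nat, p \in [pchar K] ->
    ~~ (p %| ram_index_inf a b)%N /\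
    forall (L : fieldType) (f : {rmorphism K -> L}) (x : L),
      ~~ (p %| ram_index_fin (map_poly f a) (map_poly f b) x)%N.

(* numerator, in lowest terms, of w' = (a'b - ab')/b^2 (defined up to
   a nonzero constant) *)
Definition deriv_num (K : fieldType) (a b : {poly K}) : {poly K} :=
  let n := a^`() * b - a * b^`() in n %/ gcdp n (b ^+ 2).

(* Suppose w = v o u with deg u, deg v >= 2.  Replacing u by a Moebius
   transform of it, we may assume that u = c/d has a pole at infinity.  With
   v = e/f of degree n, the fraction E/F with E = d^n e(c/d), F = d^n f(c/d)
   is then in lowest terms, so (E, F) = r (a, b) for a constant r.  By the
   chain rule the Wronskian W(E, F) = E'F - EF' factors as H W(c, d) with
   H = d^(2n-2) W(e, f)(c/d).  As the finite poles of w are simple, W(a, b)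
   is, up to a constant, the numerator g of w'; so by hypothesis either one of
   the two factors is constant or both have the same degree.  Tameness at
   infinity gives deg W(a, b) = deg a + deg b - 1, and a degree count rules
   out all three cases. *)

From HB Require Import structures.
From mathcomp Require Import all_boot all_order all_algebra all_field.
From mathcomp Require Import ring zify.
From Stdlib Require Import Classical.
Set Implicit Arguments. Unset Strict Implicit. Unset Printing Implicit Defensive.
Import GRing.Theory.
Local Open Scope ring_scope.

Section RationalDegree.
Variable K : fieldType.
Implicit Types (e f : {poly K}) (n : nat).

Lemma size_gt_coef e n : e`_n != 0 -> (n < size e)%N.
Proof. by rewrite ltnNge; apply: contra => /(nth_default 0) ->. Qed.

Lemma rdeg_lead e f : (0 < rdeg e f)%N -> (e`_(rdeg e f) != 0) || (f`_(rdeg e f) != 0).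
Proof.
rewrite /rdeg; case: (leqP (size e).-1 (size f).-1) => _.
  by rewrite -lead_coefE lead_coef_eq0 -size_poly_gt0 => ?; apply/orP; right; lia.
by rewrite -lead_coefE lead_coef_eq0 -size_poly_gt0 => ?; apply/orP; left; lia.
Qed.

Lemma size_rdegl e f : (size e <= (rdeg e f).+1)%N.
Proof. rewrite /rdeg; lia. Qed.

Lemma size_rdegr e f : (size f <= (rdeg e f).+1)%N.
Proof. rewrite /rdeg; lia. Qed.

Lemma rdeg_eq e f n : (size e <= n.+1)%N -> (size f <= n.+1)%N ->
  (e`_n != 0) || (f`_n != 0) -> rdeg e f = n.
Proof. by rewrite /rdeg => se sf /orP [/size_gt_coef | /size_gt_coef]; lia. Qed.

End RationalDegree.

Section Homogenization.
Variable K : fieldType.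
Implicit Types (c d e f g h p q : {poly K}) (n : nat).

(* [hcomp n c d e] is d^n e(c/d): [homog] with the sum taken over a fixed
   range, so that it is linear in [e].  Thus (e/f) o (c/d) is
   [hcomp n c d e / hcomp n c d f] with n = [rdeg e f]. *)
Definition hcomp n c d e : {poly K} :=
  \sum_(i < n.+1) e`_i *: (c ^+ i * d ^+ (n - i)).
Arguments hcomp n%_N c d e.

Fact hcomp_is_linear n c d : linear (hcomp n c d).
Proof.
move=> a p q; rewrite /hcomp scaler_sumr -big_split; apply: eq_bigr => i _.
by rewrite coefD coefZ scalerDl scalerA.
Qed.

HB.instance Definition _ n c d :=
  GRing.isLinear.Build K {poly K} {poly K} _ (hcomp n c d) (hcomp_is_linear n c d).

Lemma homog_hcomp n e c d : (size e <= n.+1)%N -> homog n e c d = hcomp n c d e.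
Proof.
move=> se; rewrite /homog /hcomp.
rewrite (big_ord_widen n.+1 (fun i => e`_i *: (c ^+ i * d ^+ (n - i)))) //.
rewrite big_mkcond /=; apply: eq_bigr => i _.
by case: ifP => // /negbT; rewrite -leqNgt => /(nth_default 0) ->; rewrite scale0r.
Qed.

Lemma hcomp_Xn n i c d : (i <= n)%N -> hcomp n c d 'X^i = c ^+ i * d ^+ (n - i).
Proof.
move=> le_in; rewrite /hcomp (bigD1 (Ordinal (n:=n.+1) (m:=i) le_in)) //=.
rewrite coefXn eqxx scale1r big1 ?addr0 // => j /eqP neq.
by rewrite coefXn; case: eqP => [ji|]; [case: neq; apply: val_inj | rewrite scale0r].
Qed.

Lemma hcomp_C n c d x : hcomp n c d x%:P = x *: d ^+ n.
Proof.
have -> : x%:P = x *: 'X^0 by rewrite expr0 alg_polyC.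
by rewrite linearZ /= hcomp_Xn // expr0 mul1r subn0.
Qed.

Lemma hcomp1 c d p : hcomp 1 c d p = p`_0 *: d + p`_1 *: c.
Proof. by rewrite /hcomp !big_ord_recr big_ord0 /= add0r !expr0 !expr1 mul1r mulr1. Qed.

Lemma eq_linear_poly n (Phi Psi : {poly K} -> {poly K}) :
  linear Phi -> linear Psi -> (forall i, (i <= n)%N -> Phi 'X^i = Psi 'X^i) ->
  forall p, (size p <= n.+1)%N -> Phi p = Psi p.
Proof.
move=> linPhi linPsi eqX p sp.
have lin0 (F : {poly K} -> {poly K}) : linear F -> F 0 = 0.
  move=> linF; have := linF 1 0 0; rewrite !scale1r !addr0 => F0.
  by apply: (@addrI _ (F 0)); rewrite addr0 -F0.
have linS (F : {poly K} -> {poly K}) : linear F ->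
    forall G : 'I_n.+1 -> {poly K}, F (\sum_i G i) = \sum_i F (G i).
  move=> linF G; elim/big_rec2: _ => [|i x y _ <-]; first exact: lin0.
  by rewrite -{1}[G i]scale1r linF scale1r.
have -> : p = \sum_(i < n.+1) p`_i *: 'X^i.
  rewrite -poly_def; apply/polyP => i; rewrite coef_poly.
  by case: ltnP => // le_ni; rewrite nth_default // (leq_trans sp).
rewrite !linS //; apply: eq_bigr => i _.
by rewrite -[_ *: _]addr0 linPhi linPsi (lin0 Phi) // (lin0 Psi) // eqX // -ltnS.
Qed.

Lemma hcompM n1 n2 c d p q : (size p <= n1.+1)%N -> (size q <= n2.+1)%N ->
  hcomp (n1 + n2) c d (p * q) = hcomp n1 c d p * hcomp n2 c d q.
Proof.
move=> sp sq.
apply: (@eq_linear_poly n1 (fun p => hcomp _ c d (p * q)) (fun p => hcomp n1 c d p * _)) => //.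
- by move=> a x y; rewrite mulrDl -scalerAl linearP.
- by move=> a x y; rewrite linearP mulrDl scalerAl.
move=> i le_i; rewrite hcomp_Xn //.
apply: (@eq_linear_poly n2 (fun q => hcomp _ c d ('X^i * q)) (fun q => _ * hcomp n2 c d q)) => //.
- by move=> a x y; rewrite mulrDr -scalerAr linearP.
- by move=> a x y; rewrite linearP mulrDr -scalerAr.
move=> j le_j; rewrite -exprD hcomp_Xn; last by lia.
rewrite hcomp_Xn //.
have -> : (n1 + n2 - (i + j) = (n1 - i) + (n2 - j))%N by lia.
rewrite !exprD; ring.
Qed.

Lemma size_hcomp_leq n M c d e : (size c <= M.+1)%N -> (size d <= M.+1)%N ->
  (size (hcomp n c d e) <= (n * M).+1)%N.
Proof.
move=> sc sd; apply: (big_ind (fun p => size p <= (n * M).+1)%N) => [||i _].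
- by rewrite size_poly0.
- by move=> p q sp sq; rewrite (leq_trans (size_polyD _ _)) // geq_max sp.
have size_exp p j : (size p <= M.+1)%N -> (size (p ^+ j) <= (M * j).+1)%N.
  move=> sp; apply: leq_trans (size_poly_exp_leq _ _) _.
  by rewrite ltnS leq_mul2r; apply/orP; right; lia.
have le_in : (i <= n)%N by rewrite -ltnS.
apply: leq_trans (size_scale_leq _ _) _; apply: leq_trans (size_polyMleq _ _) _.
have := size_exp c i sc; have := size_exp d (n - i)%N sd.
have : (M * i + M * (n - i) = n * M)%N by rewrite -mulnDr subnKC // mulnC.
move: (M * i)%N (M * (n - i))%N (n * M)%N; lia.
Qed.

Lemma size_exp_leq2 g k : (size g <= 2)%N -> (size (g ^+ k) <= k.+1)%N.
Proof.
move=> sg; apply: leq_trans (size_poly_exp_leq _ _) _.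
by rewrite ltnS -[X in (_ <= X)%N]mul1n leq_mul2r; apply/orP; right; lia.
Qed.

Lemma hcomp_exp k c d g : (size g <= 2)%N -> hcomp k c d (g ^+ k) = hcomp 1 c d g ^+ k.
Proof.
move=> sg; elim: k => [|k IHk]; first by rewrite !expr0 -polyC1 hcomp_C scale1r.
by rewrite exprS -add1n hcompM ?IHk ?exprS ?size_exp_leq2.
Qed.

Lemma hcomp_comp n c d g h e :
  (size g <= 2)%N -> (size h <= 2)%N -> (size e <= n.+1)%N ->
  hcomp n c d (hcomp n g h e) = hcomp n (hcomp 1 c d g) (hcomp 1 c d h) e.
Proof.
move=> sg sh; apply: (@eq_linear_poly n (hcomp n c d \o hcomp n g h)) => [a x y|a x y|i le_in].
- by rewrite !linearP.
- by rewrite linearP.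
rewrite /= !hcomp_Xn // -{1}(subnKC le_in) hcompM ?size_exp_leq2 //.
by rewrite (hcomp_exp i) // (hcomp_exp (n - i)).
Qed.

Lemma hcomp_top n e : (size e <= n.+1)%N -> hcomp n 1 0 e = (e`_n)%:P.
Proof.
move=> se; rewrite /hcomp big_ord_recr /= subnn expr0 mulr1 expr1n big1 ?add0r.
  by rewrite -mul_polyC mulr1.
move=> i _; have ni : (n - i)%N != 0%N by rewrite subn_eq0 -ltnNge ltn_ord.
by rewrite expr0n (negbTE ni) mulr0 scaler0.
Qed.

Lemma hcomp_horner n e x : (size e <= n.+1)%N -> hcomp n x%:P 1 e = (e.[x])%:P.
Proof.
move=> se; rewrite (horner_coef_wide _ se) /hcomp raddf_sum /=; apply: eq_bigr => i _.
by rewrite expr1n mulr1 polyCM rmorphXn mul_polyC.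
Qed.

Lemma dvdp_hcomp_lead n c d e : (size e <= n.+1)%N -> d %| hcomp n c d e - e`_n *: c ^+ n.
Proof.
move=> se; rewrite /hcomp big_ord_recr /= subnn expr0 mulr1 addrK.
apply: (big_ind (fun p => d %| p)) => [||i _]; [exact: dvdp0 | exact: dvdp_add |].
by rewrite -mul_polyC !dvdp_mull // dvdp_exp // subn_gt0.
Qed.

Lemma size_hcomp n c d e : (size d < size c)%N -> d != 0 -> e != 0 -> (size e <= n.+1)%N ->
  size (hcomp n c d e) = (n * (size d).-1 + (size e).-1 * (size c - size d)).+1.
Proof.
move=> sdc d0 e0 se.
have c0 : c != 0 by rewrite -size_poly_gt0 (leq_ltn_trans _ sdc).
have size_term i : (i <= n)%N ->
    size (c ^+ i * d ^+ (n - i)) = (n * (size d).-1 + i * (size c - size d)).+1.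
  move=> le_in; rewrite size_mul ?expf_neq0 // (polySpred (expf_neq0 i c0)).
  rewrite (polySpred (expf_neq0 (n - i) d0)) !size_exp addSn addnS /=.
  have sd0 : (0 < size d)%N by rewrite size_poly_gt0.
  have -> : ((size c).-1 * i = i * (size d).-1 + i * (size c - size d))%N.
    by rewrite -mulnDr mulnC; congr (_ * _)%N; lia.
  have -> : ((size d).-1 * (n - i) = n * (size d).-1 - i * (size d).-1)%N.
    by rewrite -mulnBl mulnC.
  have : (i * (size d).-1 <= n * (size d).-1)%N by rewrite leq_mul2r le_in orbT.
  by move: (i * _)%N (n * _)%N (i * _)%N => x y z; lia.
set j := (size e).-1.
have lt_jn : (j < n.+1)%N by rewrite /j prednK // size_poly_gt0.
have ej0 : e`_j != 0 by rewrite -lead_coefE lead_coef_eq0.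
rewrite /hcomp (bigD1 (Ordinal lt_jn)) //= size_polyDl; first by rewrite size_scale ?size_term.
rewrite size_scale ?size_term //; apply: (big_ind (fun p => size p < _)%N) => [||i /= ij].
- by rewrite size_poly0.
- by move=> p q sp sq; rewrite (leq_ltn_trans (size_polyD _ _)) // gtn_max sp.
have [lt_ij|lt_ji|eq_ij] := ltngtP i j; last by case/eqP: ij; apply: val_inj.
- apply: leq_ltn_trans (size_scale_leq _ _) _.
  have le_in : (i <= n)%N by rewrite -ltnS.
  by rewrite size_term // ltnS ltn_add2l ltn_mul2r lt_ij subn_gt0 sdc.
- by rewrite nth_default ?scale0r ?size_poly0 // -[size e]prednK ?size_poly_gt0.
Qed.

Lemma coprimep_hcomp_lead n c d e : (size e <= n.+1)%N -> e`_n != 0 -> coprimep c d ->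
  coprimep (hcomp n c d e) d.
Proof.
move=> se en0 ccd; have /dvdpP [q Eq] := dvdp_hcomp_lead c d se.
rewrite coprimep_sym -(subrK (e`_n *: c ^+ n) (hcomp n c d e)) Eq coprimep_addl_mul.
by rewrite coprimepZr // coprimep_expr // coprimep_sym.
Qed.

Lemma hcomp_coprime n c d e f : (0 < n)%N -> rdeg e f = n -> coprimep e f -> coprimep c d ->
  coprimep (hcomp n c d e) (hcomp n c d f).
Proof.
move=> n0 def cef ccd.
have se : (size e <= n.+1)%N by rewrite -def size_rdegl.
have sf : (size f <= n.+1)%N by rewrite -def size_rdegr.
have [[u v] /= Buv] := Bezout_eq1_coprimepP _ _ cef.
set M := maxn (size u) (size v).
have su : (size u <= M.+1)%N by rewrite leqW // leq_maxl.
have sv : (size v <= M.+1)%N by rewrite leqW // leq_maxr.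
have Bezout_hcomp : hcomp M c d u * hcomp n c d e + hcomp M c d v * hcomp n c d f = d ^+ (M + n).
  by rewrite -!hcompM // -linearD /= Buv -polyC1 hcomp_C scale1r.
set E := hcomp n c d e; set F := hcomp n c d f; set G := gcdp E F.
have Gd : coprimep G d.
  have [en0|en0] := eqVneq e`_n 0.
    have fn0 : f`_n != 0 by have := @rdeg_lead K e f; rewrite def en0 eqxx => /(_ n0).
    exact: coprimep_dvdr (dvdp_gcdr _ _) (coprimep_hcomp_lead sf fn0 ccd).
  exact: coprimep_dvdr (dvdp_gcdl _ _) (coprimep_hcomp_lead se en0 ccd).
have GdMn : G %| d ^+ (M + n) by rewrite -Bezout_hcomp dvdp_add ?dvdp_mull ?dvdp_gcdl ?dvdp_gcdr.
by rewrite coprimep_def -coprimepp (coprimep_dvdl GdMn) // coprimep_expr.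
Qed.

End Homogenization.

Section Wronskian.
Variable K : fieldType.
Implicit Types (c d e f p q : {poly K}).

Definition wronsk p q : {poly K} := p^`() * q - p * q^`().

Lemma wronsk_linearl q : linear (wronsk ^~ q).
Proof. by move=> a x y; rewrite /wronsk derivD derivZ -!mul_polyC; ring. Qed.

Lemma wronsk_linearr p : linear (wronsk p).
Proof. by move=> a x y; rewrite /wronsk derivD derivZ -!mul_polyC; ring. Qed.

Lemma wronskZZ a p q : wronsk (a *: p) (a *: q) = (a * a) *: wronsk p q.
Proof. by rewrite /wronsk !derivZ -!mul_polyC polyCM; ring. Qed.

Lemma mul_deriv_exp c i : c * (c ^+ i)^`() = i%:R * c^`() * c ^+ i.
Proof.
rewrite deriv_exp; case: i => [|i]; first by rewrite mulr0n mulr0 !mul0r.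
by rewrite -mulr_natl exprS /=; ring.
Qed.

(* The chain rule for (e/f) o (c/d), with denominators cleared. *)
Lemma wronsk_hcomp n c d e f : (size e <= n.+1)%N -> (size f <= n.+1)%N ->
  c * d * wronsk (hcomp n c d e) (hcomp n c d f) =
  hcomp (n + n) c d ('X * wronsk e f) * wronsk c d.
Proof.
have wronsk_monomials i k j l : c * d * wronsk (c ^+ i * d ^+ k) (c ^+ j * d ^+ l) =
    c ^+ i * d ^+ k * (c ^+ j * d ^+ l) *
    ((i%:R - j%:R) * c^`() * d + (k%:R - l%:R) * c * d^`()).
  transitivity
    (c ^+ j * d ^+ l * (d * d ^+ k * (c * (c ^+ i)^`()) + c * c ^+ i * (d * (d ^+ k)^`()))
     - c ^+ i * d ^+ k * (d * d ^+ l * (c * (c ^+ j)^`()) + c * c ^+ j * (d * (d ^+ l)^`()))).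
    by rewrite /wronsk !derivM; ring.
  by rewrite !mul_deriv_exp; ring.
have wronsk_Xn i j : ('X : {poly K}) * wronsk 'X^i 'X^j = (i%:R - j%:R) * 'X^(i + j).
  transitivity (('X : {poly K}) * ('X ^+ i)^`() * 'X^j - 'X^i * ('X * ('X ^+ j)^`())).
    by rewrite /wronsk; ring.
  by rewrite !mul_deriv_exp derivX exprD; ring.
have linR (g : {poly K} -> {poly K}) :
    linear g -> linear (fun e => hcomp (n + n) c d ('X * g e) * wronsk c d).
  move=> lin_g a x y; rewrite lin_g ['X * _]mulrDr -scalerAr linearP.
  by rewrite mulrDl -scalerAl.
move=> se sf.
apply: (@eq_linear_poly _ n (fun e => c * d * wronsk (hcomp n c d e) _)
  (fun e => hcomp _ c d ('X * wronsk e f) * _)) => // [a x y||i le_in].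
- by rewrite linearP wronsk_linearl -!mul_polyC; ring.
- exact/linR/wronsk_linearl.
rewrite hcomp_Xn //.
apply: (@eq_linear_poly _ n (fun f => c * d * wronsk _ (hcomp n c d f))
  (fun f => hcomp _ c d ('X * wronsk 'X^i f) * _)) => // [a x y||j le_jn].
- by rewrite linearP wronsk_linearr -!mul_polyC; ring.
- exact/linR/wronsk_linearr.
have natZ : (i%:R - j%:R) * 'X^(i + j) = (i%:R - j%:R : K) *: 'X^(i + j) :> {poly K}.
  by rewrite -mul_polyC rmorphB /= !polyC_natr.
rewrite hcomp_Xn // wronsk_monomials wronsk_Xn natZ linearZ /= hcomp_Xn; last by lia.
have -> : (n + n - (i + j) = (n - i) + (n - j))%N by lia.
rewrite -mul_polyC rmorphB /= !polyC_natr !natrB // !exprD /wronsk; ring.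
Qed.

Lemma size_wronsk_leq p q : (size (wronsk p q) <= size p + size q - 2)%N.
Proof.
have [->|p0] := eqVneq p 0; first by rewrite /wronsk deriv0 !mul0r subrr size_poly0.
have [->|q0] := eqVneq q 0; first by rewrite /wronsk deriv0 !mulr0 subrr size_poly0.
have sp := lt_size_deriv p0; have sq := lt_size_deriv q0.
have p1 : (0 < size p)%N by rewrite size_poly_gt0.
have q1 : (0 < size q)%N by rewrite size_poly_gt0.
rewrite /wronsk (leq_trans (size_polyD _ _)) // size_polyN geq_max.
apply/andP; split; apply: leq_trans (size_polyMleq _ _) _; move: sp sq p1 q1;
  by move: (size p^`()) (size q^`()) (size p) (size q); lia.
Qed.

Lemma coefM_top p q m k : (size p <= m.+1)%N -> (size q <= k.+1)%N ->
  (p * q)`_(m + k) = p`_m * q`_k.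
Proof.
move=> sp sq; rewrite coefM (bigD1 (Ordinal (leq_addr k m : m < (m + k).+1)%N)) //=.
rewrite addKn big1 ?addr0 // => l /eqP neq.
have [lt_lm|lt_ml|eq_lm] := ltngtP l m; last by case: neq; apply: val_inj.
- by rewrite [q`_ _]nth_default ?mulr0 //; apply: leq_trans sq _; lia.
- by rewrite nth_default ?mul0r //; apply: leq_trans sp _.
Qed.

Lemma size_wronsk p q : q != 0 -> (size q < size p)%N -> (size p - size q)%:R != 0 :> K ->
  size (wronsk p q) = (size p + size q - 2)%N.
Proof.
move=> q0 sqp char_pq.
have p0 : p != 0 by rewrite -size_poly_gt0 (leq_ltn_trans _ sqp).
have [N sp] : exists N, size p = N.+2.
  have : (1 < size p)%N by rewrite (leq_trans _ sqp) // ltnS lt0n size_poly_eq0.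
  by exists (size p).-2; lia.
have [B sq] : exists B, size q = B.+1 by exists (size q).-1; rewrite prednK ?size_poly_gt0.
have pN : p`_N.+1 != 0 by rewrite -[N.+1]/(N.+2.-1) -sp -lead_coefE lead_coef_eq0.
have qB : q`_B != 0 by rewrite -[B]/(B.+1.-1) -sq -lead_coefE lead_coef_eq0.
have sp' : (size p^`() <= N.+1)%N by rewrite -ltnS -sp lt_size_deriv.
have top_pq : (p^`() * q)`_(N + B) = p`_N.+1 * q`_B * N.+1%:R.
  by rewrite coefM_top ?sq // coef_deriv mulrnAl mulr_natr.
have top_qp : (p * q^`())`_(N + B) = p`_N.+1 * q`_B * B%:R.
  case: B sq qB top_pq => [|B] sq qB _.
    have -> : q^`() = 0 by rewrite [q]size1_polyC ?sq // derivC.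
    by rewrite mulr0 coef0 mulr0.
  rewrite -addSnnS coefM_top ?sp //; last by rewrite -ltnS -sq lt_size_deriv.
  by rewrite coef_deriv !mulrnAr mulr1.
have topW : (wronsk p q)`_(N + B) != 0.
  rewrite coefB top_pq top_qp -mulrBr -natrB; last by move: sqp; rewrite sp sq; lia.
  by rewrite !mulf_neq0 //; move: char_pq; rewrite sp sq subSS.
apply/eqP; rewrite eqn_leq size_wronsk_leq /= sp sq.
have -> : (N.+2 + B.+1 - 2 = (N + B).+1)%N by lia.
exact: size_gt_coef topW.
Qed.

Lemma wronsk_neq0 (p q : {poly K}) : q != 0 -> (size q < size p)%N ->
  (size p - size q)%:R != 0 :> K -> wronsk p q != 0.
Proof.
move=> q0 sqp char_pq; rewrite -size_poly_gt0 size_wronsk //.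
have : (0 < size q)%N by rewrite size_poly_gt0.
by move: sqp; move: (size p) (size q); lia.
Qed.

End Wronskian.

Section Irreducible.
Variable K : fieldType.
Implicit Types (g h p q : {poly K}).

Lemma exists_irreducible_dvdp p : (1 < size p)%N ->
  exists2 q, irreducible_poly q & q %| p.
Proof.
elim: {p}(size p) {-2}p (leqnn (size p)) => [|N IHN] p sp sp1.
  by move: sp1; rewrite ltnNge (leq_trans sp).
have [irr_p|red_p] := classic (irreducible_poly p); first by exists p.
have [q [sq1 qp not_qp]] : exists q, [/\ size q != 1%N, q %| p & ~~ (q %= p)].
  apply: NNPP => none; apply: red_p; split=> // q sq1 qp.
  by apply: contraT => not_qp; case: none; exists q.
have p0 : p != 0 by rewrite -size_poly_gt0 (ltn_trans _ sp1).
have q0 : q != 0 by apply: contraTneq qp => ->; rewrite dvd0p.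
have lt_qp : (size q < size p)%N.
  by rewrite ltn_neqAle dvdp_leq // andbT dvdp_size_eqp.
have sq1' : (1 < size q)%N by rewrite ltn_neqAle eq_sym sq1 lt0n size_poly_eq0.
have [r irr_r rq] := IHN q (leq_trans lt_qp sp) sq1'.
by exists r => //; apply: dvdp_trans rq qp.
Qed.

Lemma eqp_irredp p q : p %= q -> irreducible_poly p -> irreducible_poly q.
Proof.
move=> pq [sp irr_p]; split=> [|r sr rq]; first by rewrite -(eqp_size pq).
have rp : r %| p by rewrite (eqp_dvdr _ pq).
exact: eqp_trans (irr_p r sr rp) pq.
Qed.

Definition irr_or_sq g :=
  irreducible_poly g \/ exists h, irreducible_poly h /\ g %= h ^+ 2.

Lemma eqp_irr_or_sq p q : p %= q -> irr_or_sq p -> irr_or_sq q.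
Proof.
move=> pq [irr_p|[h [irr_h ph]]]; first by left; apply: eqp_irredp irr_p.
by right; exists h; rewrite -(eqp_ltrans pq).
Qed.

Lemma irr_or_sq_mul p q : p != 0 -> q != 0 -> irr_or_sq (p * q) ->
  [\/ size q = 1%N, size p = 1%N | size p = size q].
Proof.
move=> p0 q0 [irr_pq|[h [irr_h pqh]]].
  have [sq1|sq1] := eqVneq (size q) 1%N; first by constructor 1.
  constructor 2; have := eqp_size (irr_pq q sq1 (dvdp_mull _ (dvdpp q))).
  have : (0 < size p)%N by rewrite size_poly_gt0.
  by rewrite size_mul //; move: (size p) (size q) => m k; lia.
have coprime_h r : r %| h ^+ 2 -> ~~ (h %| r) -> size r = 1%N.
  move=> rh nhr; apply/eqP; rewrite -coprimepp (coprimep_dvdl rh) //.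
  by rewrite coprimep_sym coprimep_expl // (irreducible_poly_coprime _ irr_h).
have qh : q %| h ^+ 2 by rewrite -(eqp_dvdr _ pqh) dvdp_mull.
have ph : p %| h ^+ 2 by rewrite -(eqp_dvdr _ pqh) dvdp_mulr.
have [hq|/(coprime_h _ qh)] := boolP (h %| q); last by constructor 1.
have [hp|/(coprime_h _ ph)] := boolP (h %| p); last by constructor 2.
constructor 3; have := eqp_size pqh; rewrite size_mul // expr2 size_mul ?irredp_neq0 //.
have : (0 < size h)%N by rewrite size_poly_gt0 irredp_neq0.
have := dvdp_leq q0 hq; have := dvdp_leq p0 hp.
by move: (size p) (size q) (size h); lia.
Qed.

End Irreducible.

Section SimplePoles.
Variable K : fieldType.
Implicit Types (a b p q : {poly K}).

Lemma in_qpoly_eq0 q (mirr_q : monic_irreducible_poly q) p :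
  (in_qpoly q p == 0) = (q %| p).
Proof.
have mon_q : q \is monic by case: mirr_q.
rewrite /dvdp (Pdiv.IdomainMonic.modpE mon_q); apply/eqP/eqP => [/(congr1 val)|qp].
  by rewrite /= (mk_monicE mirr_q).
by apply: val_inj; rewrite /= (mk_monicE mirr_q) qp.
Qed.

Lemma ext_multiple_root q b : b != 0 -> irreducible_poly q -> q %| b -> q %| b^`() ->
  exists (L : fieldType) (f : {rmorphism K -> L}) (x : L),
    (map_poly f b).[x] = 0 /\ (1 < mup x (map_poly f b))%N.
Proof.
move=> b0 irr_q qb qb'.
have lq0 : lead_coef q != 0 by rewrite lead_coef_eq0 irredp_neq0.
set q1 := (lead_coef q)^-1 *: q.
have qq1 : q %= q1 by rewrite eqp_sym eqp_scale ?invr_eq0.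
have mirr_q1 : monic_irreducible_poly q1.
  by split; [apply: eqp_irredp qq1 irr_q | rewrite monicE lead_coefZ mulVf].
pose f : {rmorphism K -> {poly %/ q1 with mirr_q1}} := qpolyC q1.
pose x : {poly %/ q1 with mirr_q1} := in_qpoly q1 'X.
have root_x p : q %| p -> (map_poly f p).[x] = 0.
  rewrite (eqp_dvdl _ qq1) -(in_qpoly_eq0 mirr_q1) => /eqP <-.
  by rewrite -in_qpoly_comp_horner comp_polyXr.
exists _, f, x; split; first exact: root_x.
have fb0 : map_poly f b != 0 by rewrite map_poly_eq0.
rewrite mup_geq // expr2.
have /factor_theorem [b1 Eb] : root (map_poly f b) x by apply/eqP/root_x.
suff /factor_theorem [b2 Eb1] : root b1 x by rewrite Eb Eb1 -mulrA dvdp_mull.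
have := root_x _ qb'; rewrite -deriv_map Eb derivM derivXsubC mulr1 hornerD hornerM.
by rewrite hornerXsubC subrr mulr0 add0r => /eqP.
Qed.

Lemma coprimep_wronsk_den a b : b != 0 -> coprimep a b ->
  (forall (L : fieldType) (f : {rmorphism K -> L}) (x : L),
      (map_poly f b).[x] = 0 -> mup x (map_poly f b) = 1%N) ->
  coprimep (wronsk a b) b.
Proof.
move=> b0 cab simple_b; apply: contraT => ncop.
(* An irreducible common factor q of W(a, b) and b divides b', as a is prime
   to b; so b has a multiple root in K[X]/(q). *)
have g0 : gcdp (wronsk a b) b != 0 by rewrite gcdp_eq0 negb_and b0 orbT.
have [q irr_q qg] : exists2 q, irreducible_poly q & q %| gcdp (wronsk a b) b.
  apply: exists_irreducible_dvdp; rewrite ltn_neqAle eq_sym -coprimep_def ncop.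
  by rewrite lt0n size_poly_eq0.
have qb : q %| b := dvdp_trans qg (dvdp_gcdr _ _).
have qW : q %| wronsk a b := dvdp_trans qg (dvdp_gcdl _ _).
have qab' : q %| a * b^`() by move: qW; rewrite /wronsk dvdp_subr // dvdp_mull.
have cqa : coprimep q a by rewrite coprimep_sym (coprimep_dvdl qb cab).
have qb' : q %| b^`() by rewrite -(Gauss_dvdpr _ cqa).
have [L [f [x [bx0]]]] := ext_multiple_root b0 irr_q qb qb'.
by rewrite simple_b.
Qed.

Lemma deriv_num_eqp a b : coprimep (wronsk a b) b -> deriv_num a b %= wronsk a b.
Proof.
move=> cWb; rewrite /deriv_num -/(wronsk a b) -[X in _ %= X]divp1 eqp_divr //.
by rewrite gcdp_eqp1 coprimep_expr.
Qed.

End SimplePoles.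

Lemma tame_pole_order_neq0 (K : fieldType) (a b : {poly K}) :
  tame_ramification a b -> (size b < size a)%N -> (size a - size b)%:R != 0 :> K.
Proof.
move=> tame sba; rewrite natf_neq0_pchar; apply/pnatP => [|p p_pr p_dvd].
  by rewrite subn_gt0.
rewrite inE /=; apply/negP => /tame [].
by rewrite /ram_index_inf sba p_dvd.
Qed.

Section Decomposition.
Variable K : fieldType.
Implicit Types (a b c d e f p q : {poly K}).

Lemma coprimep_frac_eq a b p q : a != 0 -> coprimep a b -> coprimep p q ->
  a * q = b * p -> exists2 r : K, r != 0 & p = r *: a /\ q = r *: b.
Proof.
move=> a0 cab cpq Eaq.
have /dvdpP [s Ep] : a %| p by rewrite -(Gauss_dvdpr _ cab) -Eaq dvdp_mulIl.
have Eq : q = s * b by apply: (mulfI a0); rewrite Eaq Ep; ring.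
have sp : s %| p by rewrite Ep dvdp_mulIl.
have sq : s %| q by rewrite Eq dvdp_mulIl.
have /size_poly1P [r r0 Es] : size s == 1%N.
  by rewrite -coprimepp (coprimep_dvdl sq) // (coprimep_dvdr sp cpq).
by exists r; rewrite // Ep Eq Es !mul_polyC.
Qed.

Lemma wronsk_hcomp_factor n c d e f : (0 < n)%N -> c != 0 -> d != 0 ->
  (size e <= n.+1)%N -> (size f <= n)%N ->
  wronsk (hcomp n c d e) (hcomp n c d f) = hcomp (n + n - 2) c d (wronsk e f) * wronsk c d.
Proof.
move=> n0 c0 d0 se sf; apply: (mulfI (mulf_neq0 c0 d0)).
set m := (n + n - 2)%N.
have sW : (size (wronsk e f) <= m.+1)%N by apply: leq_trans (size_wronsk_leq e f) _; lia.
rewrite wronsk_hcomp ?(leqW sf) //.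
have -> : (n + n = 2 + m)%N by lia.
rewrite hcompM ?size_polyX // -['X]expr1 hcomp_Xn //= !expr1.
by rewrite mulrA.
Qed.

Lemma size_hcomp_wronsk n c d e f : (0 < n)%N -> (0 < size d < size c)%N ->
  e != 0 -> f != 0 -> wronsk e f != 0 -> (size e <= n.+1)%N -> (size f <= n)%N ->
  (size (hcomp (n + n - 2) c d (wronsk e f)) + size c + size d <=
     size (hcomp n c d e) + size (hcomp n c d f) + 1)%N.
Proof.
move=> n0 /andP [sd0 sdc] e0 f0 W0 se sf; have d0 : d != 0 by rewrite -size_poly_gt0.
have sW := size_wronsk_leq e f.
have sW0 : (0 < size (wronsk e f))%N by rewrite size_poly_gt0.
rewrite !size_hcomp ?(leqW sf) //; last by apply: leq_trans sW _; lia.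
set A := (size d).-1; set del := (size c - size d)%N; set t := (size (wronsk e f)).-1.
have sc : size c = (A + del).+1 by rewrite /A /del; lia.
have sd : size d = A.+1 by rewrite /A; lia.
have : (del + t * del <= (size e).-1 * del + (size f).-1 * del)%N.
  by rewrite -mulSn -mulnDl leq_mul2r; apply/orP; right; lia.
have : ((n + n - 2) * A + 2 * A = n * A + n * A)%N by rewrite -mulnDl subnK; lia.
rewrite sc sd; move: (t * del)%N ((size e).-1 * del)%N ((size f).-1 * del)%N.
move: ((n + n - 2) * A)%N (n * A)%N; lia.
Qed.

Lemma size_hcomp_polar n c d e f : (2 <= n)%N -> (0 < size d < size c)%N ->
  e != 0 -> f != 0 -> rdeg e f = n ->
  (size (hcomp n c d f) < size (hcomp n c d e))%N ->
  [/\ size e = n.+1, (size f <= n)%N &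
      (2 * (size c + size d) <= size (hcomp n c d e) + size (hcomp n c d f) + 2)%N].
Proof.
move=> n2 /andP [sd0 sdc] e0 f0 def; have d0 : d != 0 by rewrite -size_poly_gt0.
have se : (size e <= n.+1)%N by rewrite -def size_rdegl.
have sf : (size f <= n.+1)%N by rewrite -def size_rdegr.
rewrite !size_hcomp // ltnS ltn_add2l ltn_mul2r subn_gt0 sdc /= => lt_fe.
have de : (size e).-1 = n by rewrite -def /rdeg (maxn_idPl (ltnW lt_fe)).
split; [by rewrite -de prednK ?size_poly_gt0 | by move: lt_fe; rewrite de; lia |].
set A := (size d).-1; set del := (size c - size d)%N.
have : (2 * A <= n * A)%N by rewrite leq_mul2r n2 orbT.
have : (2 * del <= n * del)%N by rewrite leq_mul2r n2 orbT.
have sc : size c = (A + del).+1 by rewrite /A /del; lia.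
have sd : size d = A.+1 by rewrite /A; lia.
rewrite de sc sd; move: (n * A)%N (n * del)%N ((size f).-1 * del)%N; lia.
Qed.

Lemma polar_degree_count (sH sW sE sF sc sd : nat) : (2 < sc)%N -> (0 < sd)%N ->
  (sH + sW).-1 = (sE + sF - 2)%N -> (sW <= sc + sd - 2)%N ->
  (sH + sc + sd <= sE + sF + 1)%N -> (2 * (sc + sd) <= sE + sF + 2)%N ->
  ~ [\/ sW = 1%N, sH = 1%N | sH = sW].
Proof. by move=> *; case; lia. Qed.

Lemma no_polar_decomposition a b c d e f n :
  b != 0 -> coprimep a b -> (size b < size a)%N -> (size a - size b)%:R != 0 :> K ->
  irr_or_sq (wronsk a b) ->
  coprimep c d -> (0 < size d < size c)%N -> (2 < size c)%N ->
  coprimep e f -> rdeg e f = n -> (2 <= n)%N ->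
  a * hcomp n c d f = b * hcomp n c d e -> False.
Proof.
move=> b0 cab sba char_ab irrW ccd sdc sc2 cef def n2 Eab.
have a0 : a != 0 by rewrite -size_poly_gt0 (leq_ltn_trans _ sba).
have c0 : c != 0 by rewrite -size_poly_gt0 (ltn_trans _ sc2).
have sd0 : (0 < size d)%N by case/andP: sdc.
have d0 : d != 0 by rewrite -size_poly_gt0.
set E := hcomp n c d e; set F := hcomp n c d f.
have cEF : coprimep E F by apply: hcomp_coprime; rewrite 1?(ltn_trans _ n2).
have [r r0 [Er Fr]] := coprimep_frac_eq a0 cab cEF Eab.
have E0 : E != 0 by rewrite Er scaler_eq0 negb_or r0 a0.
have F0 : F != 0 by rewrite Fr scaler_eq0 negb_or r0 b0.
have e0 : e != 0 by apply: contraNneq E0 => e0; rewrite /E e0 linear0.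
have f0 : f != 0 by apply: contraNneq F0 => f0; rewrite /F f0 linear0.
have sEa : size E = size a by rewrite Er size_scale.
have sFb : size F = size b by rewrite Fr size_scale.
have ltFE : (size F < size E)%N by rewrite sEa sFb.
have [se sf sEF] := size_hcomp_polar n2 sdc e0 f0 def ltFE.
set H := hcomp (n + n - 2) c d (wronsk e f).
have WEF : wronsk E F = H * wronsk c d.
  by apply: wronsk_hcomp_factor; rewrite ?se 1?(ltn_trans _ n2).
have HW0 : H * wronsk c d != 0.
  by rewrite -WEF Er Fr wronskZZ scaler_eq0 negb_or mulf_neq0 // wronsk_neq0.
have irrHW : irr_or_sq (H * wronsk c d).
  by apply: eqp_irr_or_sq irrW; rewrite -WEF Er Fr wronskZZ eqp_sym eqp_scale ?mulf_neq0.
have [H0 Wcd0] : H != 0 /\ wronsk c d != 0.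
  by apply/andP; rewrite -negb_or -mulf_eq0.
have Wef0 : wronsk e f != 0 by apply: contraNneq H0 => W0; rewrite /H W0 linear0.
have := size_mul H0 Wcd0; rewrite -WEF Er Fr wronskZZ size_scale ?mulf_neq0 //.
rewrite size_wronsk // -sEa -sFb => /esym sHW.
have sHcd : (size H + size c + size d <= size E + size F + 1)%N.
  by apply: size_hcomp_wronsk; rewrite ?se 1?(ltn_trans _ n2).
exact: polar_degree_count sc2 sd0 sHW (size_wronsk_leq c d) sHcd sEF
  (irr_or_sq_mul H0 Wcd0 irrHW).
Qed.

Definition polar_repr n c d e f :=
  exists c' d' e' f', [/\ coprimep c' d' /\ coprimep e' f', rdeg e' f' = n,
    (0 < size d' < size c')%N, (2 < size c')%N &
    hcomp n c' d' e' = hcomp n c d e /\ hcomp n c' d' f' = hcomp n c d f].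

(* With P = u(oo), c/d = P + d1/d where d1 = c %% d, so v o u = v' o u' for
   u' = d/d1, which has a pole at infinity, and v' = v(P + 1/X), whose
   homogenised numerator and denominator are obtained from g = P X + 1. *)
Lemma moebius_polar_repr n c d e f : (0 < n)%N -> coprimep c d -> (size c <= size d)%N ->
  (2 < size d)%N -> coprimep e f -> rdeg e f = n -> polar_repr n c d e f.
Proof.
move=> n0 ccd scd sd2 cef def.
have d0 : d != 0 by rewrite -size_poly_gt0 (ltn_trans _ sd2).
set P := (c %/ d)`_0; set d1 := c %% d.
have cE : c = d1 + P *: d.
  rewrite {1}(divp_eq c d) addrC -mul_polyC -size1_polyC // size_divp // leq_subLR.
  by rewrite (leq_trans scd) // addn1 leqSpred.
have sd1 : (size d1 < size d)%N by rewrite ltn_modp.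
have cdd1 : coprimep d d1 by rewrite coprimep_modr coprimep_sym.
have d10 : d1 != 0.
  apply: contraTneq sd2 => d1_0; move: cdd1.
  by rewrite d1_0 coprimep0 -size_poly_eq1 => /eqP ->.
set g : {poly K} := P *: 'X + 1.
have sg : (size g <= 2)%N.
  rewrite (leq_trans (size_polyD _ _)) // geq_max size_poly1.
  by rewrite (leq_trans (size_scale_leq _ _)) ?size_polyX.
have sX : (size ('X : {poly K}) <= 2)%N by rewrite size_polyX.
have hcomp_g u v : hcomp 1 u v g = v + P *: u.
  by rewrite hcomp1 !coefD !coefZ !coefX !coef1 /= mulr0 mulr1 add0r addr0 scale1r.
have hcomp_X u v : hcomp 1 u v 'X = u by rewrite hcomp1 !coefX scale0r add0r scale1r.
have se : (size e <= n.+1)%N by rewrite -def size_rdegl.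
have sf : (size f <= n.+1)%N by rewrite -def size_rdegr.
have moebiusE p : (size p <= n.+1)%N -> hcomp n d d1 (hcomp n g 'X p) = hcomp n c d p.
  by move=> sp; rewrite hcomp_comp // hcomp_g hcomp_X -cE.
have size_moebius p : (size (hcomp n g 'X p) <= n.+1)%N.
  by rewrite -[n in (_ <= n.+1)%N]muln1 size_hcomp_leq.
have top_moebius p : (size p <= n.+1)%N -> (hcomp n g 'X p)`_n = p.[P].
  move=> sp; apply: polyC_inj; rewrite -hcomp_top // hcomp_comp //.
  by rewrite hcomp_g hcomp_X add0r alg_polyC hcomp_horner.
exists d, d1, (hcomp n g 'X e), (hcomp n g 'X f); split.
- split=> //; apply: hcomp_coprime => //.
  by rewrite coprimepX /root hornerD hornerZ hornerX mulr0 hornerC add0r oner_eq0.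
- apply: rdeg_eq; rewrite ?size_moebius // !top_moebius //.
  by case: (boolP (root e P)) => [/(coprimep_root cef) -> | ->]; rewrite ?orbT.
- by rewrite sd1 andbT lt0n size_poly_eq0.
- done.
by rewrite !moebiusE.
Qed.

Lemma exists_polar_repr n c d e f : (0 < n)%N -> coprimep c d -> d != 0 ->
  (1 < rdeg c d)%N -> coprimep e f -> rdeg e f = n -> polar_repr n c d e f.
Proof.
move=> n0 ccd d0 deg_u cef def.
have [sdc|scd] := ltnP (size d) (size c); last first.
  by apply: moebius_polar_repr => //; move: deg_u; rewrite /rdeg; lia.
exists c, d, e, f; split=> //; last by move: deg_u; rewrite /rdeg; lia.
by rewrite sdc andbT lt0n size_poly_eq0.
Qed.

End Decomposition.

Theorem mainTheorem9 (k : fieldType) (a b : {poly k}) :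
  (* w = a/b in lowest terms, non-constant *)
  rat_lowest a b ->
  (0 < rdeg a b)%N ->
  (* k(X)/k(w) separable, i.e. w' <> 0 *)
  a^`() * b - a * b^`() != 0 ->
  (* all ramification of w is tame *)
  tame_ramification a b ->
  (* pole of order >= 2 at infinity *)
  (size b + 2 <= size a)%N ->
  (* all finite poles over kbar are simple *)
  (forall (L : fieldType) (f : {rmorphism k -> L}) (x : L),
      (map_poly f b).[x] = 0 -> mup x (map_poly f b) = 1%N) ->
  (* numerator of w' irreducible or square of an irreducible *)
  (irreducible_poly (deriv_num a b) \/
   exists h : {poly k}, irreducible_poly h /\ deriv_num a b %= h ^+ 2) ->
  indecomposable a b.
Proof.
move=> [b0 cab] _ _ tame sab simple_poles irr_g.
move=> [c [d [e [f [[d0 ccd] [_ cef] deg_u deg_v [_]]]]]].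
rewrite !homog_hcomp ?size_rdegl ?size_rdegr //; set n := rdeg e f in deg_v *.
have sba : (size b < size a)%N by apply: leq_trans sab; rewrite addn2.
have irrW := eqp_irr_or_sq (deriv_num_eqp (coprimep_wronsk_den b0 cab simple_poles)) irr_g.
have [c' [d' [e' [f' [[ccd' cef'] def' sdc' sc2 [<- <-]]]]]] :=
  exists_polar_repr (ltnW deg_v) ccd d0 deg_u cef (erefl n).
exact: no_polar_decomposition b0 cab sba (tame_pole_order_neq0 tame sba) irrW
  ccd' sdc' sc2 cef' def' deg_v.
Qed.
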